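(* For every deterministic algorithm which, given a set $P$ of $n$ elements, an upper bound $w$ on the width, and access to a query oracle for a poset $(P,\succ)$ of width at most $w$, outputs the set of minimal elements, there is a poset of width at most $w$ on $P$ (equivalently, an adversary answering queries consistently with some such poset) for which the algorithm makes at least $\frac{w+1}{2}n-w$ queries.
   Context: A poset $(P,\succ)$ consists of a set $P$ and an irreflexive, transitive relation $\succ$. Elements $a,b$ are incomparable if neither $a\succ b$ nor $b\succ a$; the width is the maximum size of a set of mutually incomparable elements. An element $a$ is minimal if there is no $b$ with $a\succ b$. A query oracle answers a query on $(x,y)$ by reporting whether $x\succ y$, $y\succ x$, or they are incomparable. *)

From mathcomp Require Import all_boot all_order all_algebra.
Set Implicit Arguments. Unset Strict Implicit. Unset Printing Implicit Defensive.

(* A poset on 'I_n: an irreflexive, transitive (boolean) relation [r],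
   where [r x y] means x \succ y. *)
Definition is_poset n (r : rel 'I_n) : Prop :=
  irreflexive r /\ transitive r.

Definition antichain n (r : rel 'I_n) (A : {set 'I_n}) : Prop :=
  forall x y, x \in A -> y \in A -> x != y -> ~~ r x y /\ ~~ r y x.

Definition width_le n (r : rel 'I_n) (w : nat) : Prop :=
  forall A : {set 'I_n}, antichain r A -> (#|A| <= w)%N.

Definition minimals n (r : rel 'I_n) : {set 'I_n} :=
  [set a | [forall b, ~~ r a b]].

Inductive answer := AGt | ALt | AInc.

Definition oracle n (r : rel 'I_n) (x y : 'I_n) : answer :=
  if r x y then AGt else if r y x then ALt else AInc.

(* A deterministic (adaptive) query algorithm on n elements = a decision tree:
   either stop and output a set, or query a pair (x,y) and continue
   depending on the answer (x \succ y, y \succ x, incomparable). *)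
Inductive dtree (n : nat) : Type :=
  | Leaf of {set 'I_n}
  | Query of 'I_n & 'I_n & dtree n & dtree n & dtree n.

Fixpoint next_run n (t : dtree n) (r : rel 'I_n) : {set 'I_n} * nat :=
  match t with
  | Leaf s => (s, 0%N)
  | Query x y tG tL tI =>
      let res := match oracle r x y with
                 | AGt => next_run tG r
                 | ALt => next_run tL r
                 | AInc => next_run tI r
                 end in
      (res.1, res.2.+1)
  end.

Definition output n (t : dtree n) (r : rel 'I_n) : {set 'I_n} := (next_run t r).1.
Definition nqueries n (t : dtree n) (r : rel 'I_n) : nat := (next_run t r).2.

From mathcomp Require Import all_boot all_order all_algebra.
From Stdlib Require Import FunctionalExtensionality.
From mathcomp Require Import zify lra.
Set Implicit Arguments. Unset Strict Implicit. Unset Printing Implicit Defensive.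

(* The adversary keeps the hidden poset a disjoint union of w chains, given by a
   chain colouring [col] and injective heights [h], and may rebuild it after every
   query as long as it agrees with all the answers already given.  An element is
   alive while no answer has shown it to be above another element; an alive
   element with fewer than w - 1 "incomparable" answers can still be moved to the
   bottom of a chain it has not been compared with.  The potential
   2 #(alive) + sum over alive x of (w - 1 - #(incomparable answers of x))
   is n (w + 1) at the start and drops by at most 2 per query.  When the
   algorithm stops it must be at most 2 w: otherwise two posets of width at most
   w, both consistent with all the answers, have different minimal elements. *)

Lemma sum_subset_leq (T : finType) (A B : {set T}) (f : T -> nat) :
  A \subset B -> \sum_(i in A) f i <= \sum_(i in B) f i.
Proof. by move/subsetP=> sAB; apply: (sub_le_big leqnn (fun a b => leq_addr b a)). Qed.

Lemma sum_eq_le1 (T : finType) (A : {set T}) (x : T) : \sum_(z in A) ((z == x) : nat) <= 1.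
Proof.
apply: leq_trans (sum_subset_leq _ (subsetT A)) _.
by rewrite (bigD1 x) ?inE //= eqxx big1 // => z /andP[_ /negbTE ->].
Qed.

Lemma width_le_sub n (r r' : rel 'I_n) w :
  subrel r r' -> width_le r w -> width_le r' w.
Proof.
move=> sub wr A antiA; apply: wr => a b aA bA ab.
have [nab nba] := antiA a b aA bA ab.
by split; [apply: contra nab | apply: contra nba]; apply: sub.
Qed.

Section QueryPotential.

Variable n : nat.
Implicit Types (Q r : rel 'I_n) (x y z : 'I_n).

Definition add_query Q x y : rel 'I_n :=
  fun a b => [|| Q a b, (a == x) && (b == y) | (a == y) && (b == x)].

Definition agree_on Q r r' := forall a b, Q a b -> r a b = r' a b.

Lemma add_query_sym Q x y : symmetric Q -> symmetric (add_query Q x y).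
Proof.
move=> Qsym a b; rewrite /add_query Qsym.
by case: (a == x); case: (a == y); case: (b == x); case: (b == y); rewrite /= ?orbT ?orbF.
Qed.

Lemma add_queryC Q x y : add_query Q x y = add_query Q y x.
Proof.
apply: functional_extensionality => a; apply: functional_extensionality => b.
by rewrite /add_query; congr (_ || _); apply: orbC.
Qed.

Lemma agree_on_add_query Q x y r r' : agree_on (add_query Q x y) r r' -> agree_on Q r r'.
Proof. by move=> agr a b Qab; rewrite agr // /add_query Qab. Qed.

Lemma agree_on_trans Q r1 r2 r3 : agree_on Q r1 r2 -> agree_on Q r2 r3 -> agree_on Q r1 r3.
Proof. by move=> agr12 agr23 a b Qab; rewrite agr12 // agr23. Qed.

Definition beaten Q r x := [exists y, Q x y && r x y].

Definition alive Q r := [set x | ~~ beaten Q r x].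

Definition inc_partners Q r x := [set y | [&& y != x, Q x y, ~~ r x y & ~~ r y x]].

Variable w : nat.

Definition deficit Q r x := w.-1 - #|inc_partners Q r x|.

Definition movable Q r x := (x \in alive Q r) && (0 < deficit Q r x).

Definition potential Q r := 2 * #|alive Q r| + \sum_(x in alive Q r) deficit Q r x.

Section Agreement.

Variables (Q r r' : rel 'I_n).
Hypotheses (Qsym : symmetric Q) (agr : agree_on Q r r').

Lemma alive_agree : alive Q r = alive Q r'.
Proof.
apply/setP => x; rewrite !inE /beaten; congr negb.
by apply: eq_existsb => y; case Qxy: (Q x y) => //=; apply: agr.
Qed.

Lemma inc_partners_agree x : inc_partners Q r x = inc_partners Q r' x.
Proof.
apply/setP => y; rewrite !inE.
by case Qxy: (Q x y); rewrite ?andbF //= (agr Qxy) agr // Qsym.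
Qed.

Lemma deficit_agree x : deficit Q r x = deficit Q r' x.
Proof. by rewrite /deficit inc_partners_agree. Qed.

Lemma potential_agree : potential Q r = potential Q r'.
Proof.
rewrite /potential alive_agree; congr (_ + _).
by apply: eq_bigr => x _; apply: deficit_agree.
Qed.

Lemma movable_agree x : movable Q r x = movable Q r' x.
Proof. by rewrite /movable alive_agree deficit_agree. Qed.

End Agreement.

Lemma alive_add_query Q r x y : alive (add_query Q x y) r \subset alive Q r.
Proof.
apply/subsetP => z; rewrite !inE /beaten; apply: contra => /existsP[t /andP[Qzt rzt]].
by apply/existsP; exists t; rewrite /add_query Qzt.
Qed.

Lemma deficit_add_query Q r x y z : deficit (add_query Q x y) r z <= deficit Q r z.
Proof.
rewrite /deficit leq_sub2l // subset_leq_card //; apply/subsetP => t.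
by rewrite !inE /add_query => /and4P[-> -> -> ->].
Qed.

Lemma movable_add_query Q r x y z : movable (add_query Q x y) r z -> movable Q r z.
Proof.
case/andP=> zA dz; rewrite /movable (subsetP (alive_add_query Q r x y) z zA).
exact: leq_trans dz (deficit_add_query _ _ _ _ _).
Qed.

Lemma beaten_add_incomparable Q r x y z : ~~ r x y -> ~~ r y x ->
  beaten (add_query Q x y) r z = beaten Q r z.
Proof.
move=> nrxy nryx; apply/existsP/existsP => -[t /andP[Qzt rzt]]; last first.
  by exists t; rewrite /add_query Qzt.
exists t; move: Qzt; rewrite /add_query rzt andbT.
case/or3P=> // /andP[/eqP zE /eqP tE]; move: rzt; rewrite zE tE.
  by rewrite (negbTE nrxy).
by rewrite (negbTE nryx).
Qed.

Lemma potential_add_incomparable Q r x y : ~~ r x y -> ~~ r y x ->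
  potential Q r <= potential (add_query Q x y) r + 2.
Proof.
move=> nrxy nryx.
have alive_eq : alive (add_query Q x y) r = alive Q r.
  by apply/setP => z; rewrite !inE beaten_add_incomparable.
have deficit_drop z :
    deficit Q r z <= deficit (add_query Q x y) r z + ((z == x) + (z == y)).
  have inc_sub : inc_partners (add_query Q x y) r z \subset
      inc_partners Q r z :|: [set t | (z == x) && (t == y)] :|: [set t | (z == y) && (t == x)].
    apply/subsetP => t; rewrite !inE /add_query.
    by case/and4P => -> /or3P[->|/andP[-> ->]|/andP[-> ->]] -> ->; rewrite ?orbT.
  have card_new (b : bool) (t : 'I_n) : #|[set t' | b && (t' == t)]| <= b.
    case: b; last by rewrite (_ : [set _ | _] = set0) ?cards0 //; apply/setP => ?; rewrite !inE.
    by rewrite (_ : [set _ | _] = [set t]) ?cards1 //; apply/setP => ?; rewrite !inE.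
  have card_inc : #|inc_partners (add_query Q x y) r z|
                   <= #|inc_partners Q r z| + ((z == x) + (z == y)).
    apply: leq_trans (subset_leq_card inc_sub) _.
    apply: leq_trans (leq_card_setU _ _) _; rewrite addnA leq_add ?card_new //.
    by apply: leq_trans (leq_card_setU _ _) _; rewrite leq_add2l card_new.
  by move: card_inc; rewrite /deficit; lia.
rewrite /potential alive_eq -addnA leq_add2l.
apply: (@leq_trans (\sum_(z in alive Q r)
                      (deficit (add_query Q x y) r z + ((z == x) + (z == y))))).
  by apply: leq_sum => z _; apply: deficit_drop.
by rewrite big_split /= leq_add2l big_split /= (leq_add (sum_eq_le1 _ x) (sum_eq_le1 _ y)).
Qed.

Lemma inc_partners_add_comparable Q r u v z : irreflexive r -> r u v ->
  inc_partners (add_query Q u v) r z = inc_partners Q r z.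
Proof.
move=> irr ruv; apply/setP => t; rewrite !inE /add_query.
case: (Q z t); rewrite ?andbF //=.
by apply/and4P => -[_ /orP[] /andP[/eqP-> /eqP->]]; rewrite ruv // andbF.
Qed.

Lemma alive_add_comparable Q r u v : is_poset r -> r u v ->
  alive Q r :\ u \subset alive (add_query Q u v) r.
Proof.
case=> irr tr ruv; apply/subsetP => z; rewrite !inE /beaten => /andP[zu]; apply: contra.
case/existsP => t /andP[]; rewrite /add_query.
case/or3P=> [Qzt rzt|/andP[/eqP zE _]|/andP[/eqP zE /eqP tE]].
- by apply/existsP; exists t; rewrite Qzt rzt.
- by rewrite zE eqxx in zu.
- by rewrite zE tE => rvu; have := irr u; rewrite (tr _ _ _ ruv rvu).
Qed.

Lemma potential_add_comparable Q r u v : is_poset r -> r u v -> ~~ movable Q r u ->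
  potential Q r <= potential (add_query Q u v) r + 2.
Proof.
move=> po ruv u_dead.
have sub := alive_add_comparable Q po ruv.
have deficit_eq z : deficit (add_query Q u v) r z = deficit Q r z.
  by rewrite /deficit inc_partners_add_comparable //; case: po.
rewrite /potential (eq_bigr _ (fun z _ => deficit_eq z)).
have le_alive := subset_leq_card sub; have le_sum := sum_subset_leq (deficit Q r) sub.
case uA: (u \in alive Q r); last first.
  rewrite (_ : alive Q r :\ u = alive Q r) in le_alive le_sum; last first.
    by apply/setP => z; rewrite in_setD1; case: eqP => // ->; rewrite uA.
  by apply: leq_trans (leq_addr 2 _); rewrite leq_add // leq_mul2l le_alive orbT.
move: u_dead; rewrite /movable uA lt0n negbK => /eqP du0.
rewrite (cardsD1 u) uA (big_setD1 u uA) /= du0 add0n mulnDr muln1 -addnA addnC leq_add2r.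
by rewrite leq_add // leq_mul2l le_alive orbT.
Qed.

Lemma potential_no_queries r : potential [rel _ _ | false] r = n * (w.-1 + 2).
Proof.
have alive_all : alive [rel _ _ | false] r = setT.
  by apply/setP => z; rewrite !inE /beaten; apply/existsP => -[].
have deficit_max z : deficit [rel _ _ | false] r z = w.-1.
  rewrite /deficit (_ : inc_partners _ _ _ = set0) ?cards0 ?subn0 //.
  by apply/setP => t; rewrite !inE andbF.
rewrite /potential alive_all (eq_bigr _ (fun z _ => deficit_max z)) sum_nat_const.
by rewrite cardsT card_ord; lia.
Qed.

End QueryPotential.

Section ChainPosets.

Variables (n w : nat).
Implicit Types (Q r : rel 'I_n) (x y z : 'I_n) (col : 'I_n -> 'I_w) (h : 'I_n -> nat).

Definition chain_rel col h : rel 'I_n := fun a b => (col a == col b) && (h b < h a).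

Lemma chain_rel_poset col h : is_poset (chain_rel col h).
Proof.
split=> [a|b a c]; rewrite /chain_rel; first by rewrite ltnn andbF.
by case/andP=> /eqP-> hab /andP[/eqP-> hbc]; rewrite eqxx (ltn_trans hbc hab).
Qed.

Lemma chain_rel_comparable col h a b : injective h -> a != b -> col a = col b ->
  chain_rel col h a b || chain_rel col h b a.
Proof.
move=> h_inj ab cab; rewrite /chain_rel cab eqxx /=.
by case: ltngtP => // /h_inj abE; rewrite abE eqxx in ab.
Qed.

Lemma chain_rel_width col h : injective h -> width_le (chain_rel col h) w.
Proof.
move=> h_inj A antiA; rewrite -(card_ord w); apply: (@leq_card_in _ _ col) => a b aA bA cab.
apply/eqP; apply: contraT => ab; have [nab nba] := antiA a b aA bA ab.
by move: (chain_rel_comparable h_inj ab cab); rewrite (negbTE nab) (negbTE nba).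
Qed.

Lemma chain_has_minimal col h j : (exists z, col z = j) ->
  exists2 b, col b = j & b \in minimals (chain_rel col h).
Proof.
case=> z0 cz0; case: (@arg_minnP _ z0 (fun z => col z == j) h); first by rewrite cz0.
move=> b /eqP cbj bmin; exists b => //; rewrite inE; apply/forallP => a.
apply/negP; rewrite /chain_rel => /andP[/eqP cba hab].
by have := bmin a; rewrite -cba cbj eqxx leqNgt hab => /(_ isT).
Qed.

Definition bottom_at h x : 'I_n -> nat := fun z => if z == x then 0 else (h z).+1.

Lemma bottom_at_inj h x : injective h -> injective (bottom_at h x).
Proof.
move=> h_inj a b; rewrite /bottom_at.
by case: (a =P x) => [->|_]; case: (b =P x) => [->|_] // [] /h_inj.
Qed.

Lemma bottom_at_minimal col h x : x \in minimals (chain_rel col (bottom_at h x)).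
Proof. by rewrite inE; apply/forallP => b; rewrite /chain_rel /bottom_at eqxx ltn0 andbF. Qed.

Lemma bottom_at_above col h x y : y != x -> col y = col x ->
  y \notin minimals (chain_rel col (bottom_at h x)).
Proof.
move=> yx cyx; rewrite inE negb_forall; apply/existsP; exists x.
by rewrite negbK /chain_rel /bottom_at cyx !eqxx (negbTE yx).
Qed.

Lemma agree_bottom_at Q col h x : injective h -> symmetric Q ->
  x \in alive Q (chain_rel col h) ->
  agree_on Q (chain_rel col h) (chain_rel col (bottom_at h x)).
Proof.
move=> h_inj Qsym; rewrite inE /beaten => x_alive a b Qab; rewrite /chain_rel /bottom_at.
case: (a =P x) => [ax|ax]; case: (b =P x) => [bx|bx].
- by rewrite ax bx !ltnn !andbF.
- rewrite ltn0 andbF; subst a; apply/negbTE; apply: contra x_alive => rxb.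
  by apply/existsP; exists b; rewrite Qab.
- subst b; rewrite ltn0Sn andbT; case cax: (col a == col x) => //=.
  case: (ltngtP (h x) (h a)) => // [hxa|hxa]; last by case: ax; apply: h_inj.
  case/negP: x_alive; apply/existsP; exists a.
  by rewrite -Qsym Qab /chain_rel eq_sym cax.
- by rewrite ltnS.
Qed.

Definition recolor col x (j : 'I_w) : 'I_n -> 'I_w := fun z => if z == x then j else col z.

Lemma agree_recolor Q col h x j : symmetric Q -> j != col x ->
    (forall b, b != x -> Q x b -> col b != col x) ->
    (forall b, b != x -> Q x b -> col b != j) ->
  agree_on Q (chain_rel col h) (chain_rel (recolor col x j) (bottom_at h x)).
Proof.
move=> Qsym jx other_col other_j a b Qab; rewrite /chain_rel /recolor /bottom_at.
case: (a =P x) => [ax|/eqP ax]; case: (b =P x) => [bx|/eqP bx].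
- by rewrite ax bx !ltnn !andbF.
- by subst a; rewrite ltn0 andbF eq_sym (negbTE (other_col b bx Qab)).
- subst b; rewrite Qsym in Qab.
  by rewrite (negbTE (other_col a ax Qab)) (negbTE (other_j a ax Qab)).
- by rewrite ltnS.
Qed.

Lemma fresh_color Q col h x : #|inc_partners Q (chain_rel col h) x| < w.-1 ->
  exists2 j, j != col x & forall b, b != x -> Q x b -> col b != j.
Proof.
set I := inc_partners _ _ x => card_I.
have : 0 < #|~: (col x |: (col @: I))|.
  rewrite cardsCs setCK card_ord subn_gt0.
  move: (leq_card_setU [set col x] (col @: I)).1 (leq_imset_card col I).
  by rewrite cards1; lia.
case/card_gt0P => j; rewrite !inE negb_or => /andP[jx j_unused].
exists j => // b bx Qxb; apply: contraTneq j_unused => cbj; rewrite -cbj in jx *.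
by rewrite negbK imset_f // inE bx Qxb /chain_rel (negbTE jx) eq_sym (negbTE jx).
Qed.

End ChainPosets.

Section HangChain.

Variables (n w : nat) (col : 'I_n -> 'I_w) (h : 'I_n -> nat) (x : 'I_n) (j : 'I_w).
Hypothesis jx : j != col x.

Definition hang_chain : rel 'I_n :=
  fun a b => chain_rel col (bottom_at h x) a b || ((b == x) && (col a == j)).

Lemma hang_chain_poset : is_poset hang_chain.
Proof.
have [irr tr] := chain_rel_poset col (bottom_at h x).
split=> [a|b a c]; rewrite /hang_chain.
  by rewrite irr /=; apply/negP => /andP[/eqP-> /eqP cxj]; move: jx; rewrite cxj eqxx.
case/orP=> [rab|/andP[/eqP bx /eqP caj]] /orP[rbc|/andP[/eqP cx /eqP cbj]].
- by rewrite (tr _ _ _ rab rbc).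
- by move: rab; rewrite /chain_rel cx eqxx cbj => /andP[/eqP-> _]; rewrite eqxx orbT.
- by move: rbc; rewrite bx /chain_rel /bottom_at eqxx ltn0 andbF.
- by move: jx; rewrite -bx cbj eqxx.
Qed.

Lemma hang_chain_width : injective h -> width_le hang_chain w.
Proof.
move=> h_inj; apply: (width_le_sub _ (chain_rel_width (col := col) (bottom_at_inj (x := x) h_inj))).
by move=> a b rab; rewrite /hang_chain rab.
Qed.

End HangChain.

Section ForcedOutput.

Variables (n w : nat) (Q : rel 'I_n) (col : 'I_n -> 'I_w) (h : 'I_n -> nat).
Variable s : {set 'I_n}.
Hypotheses (h_inj : injective h) (col_surj : forall j, exists z, col z = j).
Hypothesis Q_sym : symmetric Q.
Hypothesis s_forced : forall r, is_poset r -> width_le r w ->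
  agree_on Q (chain_rel col h) r -> s = minimals r.

Local Notation r := (chain_rel col h).

Lemma forced_bottom_at x : x \in alive Q r -> s = minimals (chain_rel col (bottom_at h x)).
Proof.
move=> xA; apply: s_forced (agree_bottom_at h_inj Q_sym xA).
  exact: chain_rel_poset.
exact: chain_rel_width (bottom_at_inj (x := x) h_inj).
Qed.

Lemma alive_col_inj : {in alive Q r &, injective col}.
Proof.
move=> x y xA yA cxy; apply/eqP; apply: contraT => xy.
have := bottom_at_minimal col h x.
by rewrite -(forced_bottom_at xA) (forced_bottom_at yA) (negbTE (bottom_at_above h xy cxy)).
Qed.

Lemma card_alive_le : #|alive Q r| <= w.
Proof. by have := @leq_card_in _ _ col _ alive_col_inj; rewrite card_ord. Qed.

Lemma alive_deficit_eq0 x : x \in alive Q r -> deficit w Q r x = 0.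
Proof.
move=> xA; apply/eqP; rewrite -leqn0 leqNgt; apply/negP; rewrite /deficit subn_gt0.
case/fresh_color=> j jx j_fresh.
have agr1 := agree_bottom_at h_inj Q_sym xA.
have agr2 : agree_on Q r (hang_chain col h x j).
  apply: agree_on_trans agr1 _ => a b Qab; rewrite /hang_chain.
  case: (b =P x) => [bx|] /=; last by rewrite orbF.
  case: (col a =P j) => [caj|]; last by rewrite orbF.
  have ax : a != x by apply: contraNneq jx => ax; rewrite -caj ax.
  by have := j_fresh a ax; rewrite -Q_sym -bx Qab caj eqxx => /(_ isT).
have [b cbj bmin] := chain_has_minimal (bottom_at h x) (col_surj j).
have : b \notin minimals (hang_chain col h x j).
  by rewrite inE negb_forall; apply/existsP; exists x; rewrite negbK /hang_chain eqxx cbj eqxx orbT.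
rewrite -(s_forced (hang_chain_poset h jx) (hang_chain_width h_inj) agr2).
by rewrite (forced_bottom_at xA) bmin.
Qed.

Lemma forced_potential_le : potential w Q r <= 2 * w.
Proof.
rewrite /potential big1 ?addn0 ?leq_mul2l ?card_alive_le ?orbT //.
exact: alive_deficit_eq0.
Qed.

End ForcedOutput.

Definition branch n (a : answer) (tG tL tI : dtree n) : dtree n :=
  match a with AGt => tG | ALt => tL | AInc => tI end.

Lemma output_Query n x y tG tL tI (r : rel 'I_n) :
  output (Query x y tG tL tI) r = output (branch (oracle r x y) tG tL tI) r.
Proof. by rewrite /output /=; case: (oracle r x y). Qed.

Lemma nqueries_Query n x y tG tL tI (r : rel 'I_n) :
  nqueries (Query x y tG tL tI) r = (nqueries (branch (oracle r x y) tG tL tI) r).+1.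
Proof. by rewrite /nqueries /=; case: (oracle r x y). Qed.

Lemma oracle_agree n Q (r r' : rel 'I_n) x y :
  agree_on (add_query Q x y) r r' -> oracle r x y = oracle r' x y.
Proof. by move=> agr; rewrite /oracle !agr // /add_query !eqxx ?orbT. Qed.

Section Adversary.

Variables (n w : nat).
Implicit Types (Q : rel 'I_n) (x y z : 'I_n) (col : 'I_n -> 'I_w) (h : 'I_n -> nat).

(* The last clause: a movable element has only been compared with other chains,
   so it can be moved to a new chain without contradicting any answer. *)
Definition adversary_inv col h Q : Prop :=
  [/\ injective h, (forall j, exists z, col z = j), symmetric Q &
      forall x b, movable w Q (chain_rel col h) x -> b != x -> Q x b -> col b != col x].

Definition affordable_answer col h Q x y : Prop :=
  exists col' h', [/\ adversary_inv col' h' (add_query Q x y),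
    agree_on Q (chain_rel col h) (chain_rel col' h') &
    potential w Q (chain_rel col h)
      <= potential w (add_query Q x y) (chain_rel col' h') + 2].

Lemma affordable_answerC col h Q x y :
  affordable_answer col h Q y x -> affordable_answer col h Q x y.
Proof. by rewrite /affordable_answer add_queryC. Qed.

Lemma affordable_keep col h Q x y : adversary_inv col h Q ->
    (forall z b, movable w (add_query Q x y) (chain_rel col h) z -> b != z ->
       ((z == x) && (b == y)) || ((z == y) && (b == x)) -> col b != col z) ->
    potential w Q (chain_rel col h)
      <= potential w (add_query Q x y) (chain_rel col h) + 2 ->
  affordable_answer col h Q x y.
Proof.
case=> h_inj col_surj Q_sym sep new_sep pot; exists col, h; split=> //.
split=> //; first exact: add_query_sym.
move=> z b z_mov bz; rewrite /add_query => /orP[Qzb|new_edge].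
  exact: sep (movable_add_query z_mov) bz Qzb.
exact: new_sep z_mov bz new_edge.
Qed.

Lemma affordable_incomparable col h Q x y : adversary_inv col h Q ->
    ~~ chain_rel col h x y -> ~~ chain_rel col h y x ->
  affordable_answer col h Q x y.
Proof.
move=> inv nrxy nryx; have [h_inj _ _ _] := inv.
apply: affordable_keep inv _ (potential_add_incomparable w Q nrxy nryx).
have diff_col a b : ~~ chain_rel col h a b -> ~~ chain_rel col h b a -> b != a -> col b != col a.
  move=> nrab nrba ba; apply/eqP => cba.
  by move: (chain_rel_comparable h_inj ba cba); rewrite (negbTE nrab) (negbTE nrba).
move=> z b _ bz /orP[] /andP[/eqP zE /eqP bE]; rewrite zE bE in bz *.
  exact: diff_col nrxy nryx bz.
exact: diff_col nryx nrxy bz.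
Qed.

Lemma recolor_surj col x y j : (forall k, exists z, col z = k) -> y != x -> col y = col x ->
  forall k, exists z, recolor col x j z = k.
Proof.
move=> col_surj yx cyx k; rewrite /recolor.
case: (k =P j) => [->|kj]; first by exists x; rewrite eqxx.
have [z czk] := col_surj k; case: (z =P x) => [zx|/eqP zx].
  by exists y; rewrite (negbTE yx) cyx -zx.
by exists z; rewrite (negbTE zx).
Qed.

Lemma affordable_relocate col h Q x y : adversary_inv col h Q ->
    y != x -> col y = col x -> movable w Q (chain_rel col h) x ->
  affordable_answer col h Q x y.
Proof.
move=> [h_inj col_surj Q_sym sep] yx cyx x_mov; have /andP[_ dx] := x_mov.
have [j jx j_fresh] : exists2 j, j != col x & forall b, b != x -> Q x b -> col b != j.
  by apply: (fresh_color (h := h)); move: dx; rewrite /deficit subn_gt0.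
set col' := recolor col x j; set h' := bottom_at h x.
have agr : agree_on Q (chain_rel col h) (chain_rel col' h').
  by apply: agree_recolor => // b; apply: sep.
have col'x : col' x = j by rewrite /col' /recolor eqxx.
have col'y : col' y = col x by rewrite /col' /recolor (negbTE yx).
exists col', h'; split=> //; last first.
  rewrite (potential_agree w Q_sym agr) potential_add_incomparable //.
  by rewrite /chain_rel col'x col'y (negbTE jx).
  by rewrite /chain_rel col'x col'y eq_sym (negbTE jx).
split; [exact: bottom_at_inj | exact: recolor_surj col_surj yx cyx | exact: add_query_sym |].
move=> z b /movable_add_query; rewrite -(movable_agree w Q_sym agr) => z_mov bz.
rewrite /add_query => /or3P[Qzb|/andP[/eqP-> /eqP->]|/andP[/eqP-> /eqP->]].
- rewrite /col' /recolor; have [zx|zx] := eqVneq z x.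
    by subst z; rewrite (negbTE bz) j_fresh.
  have [bx|bx] := eqVneq b x; last exact: sep z b z_mov bz Qzb.
  by subst b; rewrite eq_sym j_fresh // Q_sym.
- by rewrite col'x col'y eq_sym.
- by rewrite col'x col'y.
Qed.

Lemma affordable_comparable col h Q u v : adversary_inv col h Q -> chain_rel col h u v ->
    ~~ movable w Q (chain_rel col h) u -> ~~ movable w Q (chain_rel col h) v ->
  affordable_answer col h Q u v.
Proof.
move=> inv ruv u_fixed v_fixed.
apply: affordable_keep inv _ (potential_add_comparable (chain_rel_poset col h) ruv u_fixed).
move=> z b /movable_add_query z_mov _ /orP[] /andP[/eqP zE _]; move: z_mov; rewrite zE.
  by rewrite (negbTE u_fixed).
by rewrite (negbTE v_fixed).
Qed.

Lemma adversary_step col h Q x y : adversary_inv col h Q -> affordable_answer col h Q x y.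
Proof.
move=> inv; set r := chain_rel col h.
case: (boolP (~~ r x y && ~~ r y x)) => [/andP[nrxy nryx]|].
  exact: affordable_incomparable inv nrxy nryx.
have [irr _] := chain_rel_poset col h.
have comp_col a b : r a b -> b != a /\ col b = col a.
  by move=> rab; split; [apply: contraTneq rab => ->; rewrite /r irr | case/andP: rab => /eqP].
rewrite -negb_or negbK => comp.
have [yx cyx] : y != x /\ col y = col x.
  by case/orP: comp => /comp_col // [xy cxy]; rewrite eq_sym cxy.
have [x_mov|x_fixed] := boolP (movable w Q r x); first exact: affordable_relocate.
have [y_mov|y_fixed] := boolP (movable w Q r y).
  by apply/affordable_answerC/affordable_relocate; rewrite // eq_sym.
case/orP: comp => [rxy|ryx]; first exact: affordable_comparable.
exact/affordable_answerC/affordable_comparable.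
Qed.

Lemma adversary_bound (t : dtree n) col h Q : adversary_inv col h Q ->
    (forall r, is_poset r -> width_le r w -> agree_on Q (chain_rel col h) r ->
       output t r = minimals r) ->
  exists r, [/\ is_poset r, width_le r w, agree_on Q (chain_rel col h) r &
    potential w Q (chain_rel col h) <= 2 * nqueries t r + 2 * w].
Proof.
elim: t col h Q => [s|x y tG IHG tL IHL tI IHI] col h Q inv correct.
  have [h_inj col_surj Q_sym _] := inv.
  exists (chain_rel col h); split=> //; [exact: chain_rel_poset | exact: chain_rel_width |].
  rewrite /nqueries /= muln0 add0n; apply: forced_potential_le col_surj Q_sym _ => // r po wr agr.
  exact: (correct r po wr agr).
have [col' [h' [inv' agr' pot']]] := adversary_step x y inv.
have IH a : forall col h Q, adversary_inv col h Q ->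
    (forall r, is_poset r -> width_le r w -> agree_on Q (chain_rel col h) r ->
       output (branch a tG tL tI) r = minimals r) ->
  exists r, [/\ is_poset r, width_le r w, agree_on Q (chain_rel col h) r &
    potential w Q (chain_rel col h) <= 2 * nqueries (branch a tG tL tI) r + 2 * w].
  by case: a.
have correct' r : is_poset r -> width_le r w ->
    agree_on (add_query Q x y) (chain_rel col' h') r ->
  output (branch (oracle (chain_rel col' h') x y) tG tL tI) r = minimals r.
  move=> po wr agr; rewrite (oracle_agree agr) -output_Query.
  exact: correct po wr (agree_on_trans agr' (agree_on_add_query agr)).
have [r [po wr agr bound]] := IH _ _ _ _ inv' correct'.
exists r; split=> //; first exact: agree_on_trans agr' (agree_on_add_query agr).
by move: pot' bound; rewrite nqueries_Query -(oracle_agree agr); lia.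
Qed.

End Adversary.

Lemma adversary_inv_init n w : 0 < w -> w <= n ->
  exists col h, @adversary_inv n w col h [rel _ _ | false].
Proof.
move=> w_gt0 w_le_n; pose col (z : 'I_n) := insubd (Ordinal w_gt0) (val z).
exists col, val; split=> //; first exact: val_inj.
move=> j; exists (widen_ord w_le_n j); apply: val_inj.
by rewrite val_insubd /= ltn_ord.
Qed.

Import GRing.Theory Num.Theory.
Local Open Scope ring_scope.

Theorem theorem12 (n w : nat) (hw1 : (1 <= w)%N) (hwn : (w <= n)%N)
  (alg : dtree n)
  (correct : forall r : rel 'I_n, is_poset r -> width_le r w ->
               output alg r = minimals r) :
  exists r : rel 'I_n, [/\ is_poset r, width_le r w &
    (w%:R + 1) / 2 * n%:R - w%:R <= (nqueries alg r)%:R :> rat].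
Proof.
have [col [h inv]] := adversary_inv_init hw1 hwn.
have [r [po wr _]] := adversary_bound (t := alg) inv (fun r po wr _ => correct r po wr).
rewrite potential_no_queries => bound; exists r; split=> //.
have {bound} : (n * w + n <= 2 * nqueries alg r + 2 * w)%N.
  by move: bound (prednK hw1); nia.
rewrite -(ler_nat rat) !natrD !natrM; lra.
Qed.
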